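(* Let $p$ be an odd prime, $n$ a positive integer with $\gcd(n,p)=1$, and let $S$ be a simultaneously negacyclic subspace of $\mathbb{F}_p^n\times\mathbb{F}_p^n$. Then $S$ is uniquely negacyclic if and only if every element of $S$ of the form $(\mathbf{0},\mathbf{b})$ has $\mathbf{b}=\mathbf{0}$. Further, if $S$ is uniquely negacyclic with generating pair $(g,f)$, then $S=\{(ag,af):a\in\mathcal{R}\}$ (computed in $\mathcal{R}$).
   Context: Let $N:\mathbb{F}_p^n\to\mathbb{F}_p^n$ be $(u_0,\dots,u_{n-1})\mapsto(-u_{n-1},u_0,\dots,u_{n-2})$; $S$ is simultaneously negacyclic if $(\mathbf{a},\mathbf{b})\in S$ implies $(N\mathbf{a},N\mathbf{b})\in S$. Let $\mathcal{R}=\mathbb{F}_p[X]/\langle X^n+1\rangle$, with vectors $(a_0,\dots,a_{n-1})\in\mathbb{F}_p^n$ identified with polynomials $a_0+a_1X+\cdots+a_{n-1}X^{n-1}\in\mathcal{R}$, so $S$ is also regarded as a subset of $\mathcal{R}\times\mathcal{R}$. Let $F=\{\mathbf{a}:(\mathbf{a},\mathbf{b})\in S\}$; it is an ideal of $\mathcal{R}$; let $g(X)$ be its generator (the monic polynomial of lowest degree in it, a divisor of $X^n+1$). $S$ is called uniquely negacyclic if there is a unique $f\in\mathcal{R}$ with $(g,f)\in S$; the pair $(g,f)$ is then called the generating pair of $S$. *)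

From HB Require Import structures.
From mathcomp Require Import all_boot all_order all_algebra.
Set Implicit Arguments. Unset Strict Implicit. Unset Printing Implicit Defensive.
Import GRing.Theory.
Local Open Scope ring_scope.

Section Negacyclic.
Variables (F : finFieldType) (n : nat).

(* The modulus X^n + 1 defining R = F[X]/<X^n+1>. *)
Definition negmod : {poly F} := 'X^n + 1.

Definition vpoly (v : 'rV[F]_n) : {poly F} := \sum_(i < n) v 0 i *: 'X^i.

Definition redR (a : {poly F}) : 'rV[F]_n := \row_(i < n) (a %% negmod)`_i.

Definition negshift (v : 'rV[F]_n) : 'rV[F]_n :=
  \row_(i < n) (if (i : nat) == 0%N then - (vpoly v)`_(n.-1)
                else (vpoly v)`_((i : nat).-1)).

Definition is_subspace (S : {set 'rV[F]_n * 'rV[F]_n}) : Prop :=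
  [/\ (0, 0) \in S,
      forall x y, x \in S -> y \in S -> (x.1 + y.1, x.2 + y.2) \in S &
      forall (c : F) x, x \in S -> (c *: x.1, c *: x.2) \in S].

Definition simul_negacyclic (S : {set 'rV[F]_n * 'rV[F]_n}) : Prop :=
  forall a b, (a, b) \in S -> (negshift a, negshift b) \in S.

Definition first_proj (S : {set 'rV[F]_n * 'rV[F]_n}) : {set 'rV[F]_n} :=
  [set a | [exists b, (a, b) \in S]].

(* g is the generator of the ideal first_proj S: the monic polynomial of
   lowest degree in it, a divisor of X^n+1 (for the zero ideal, X^n+1). *)
Definition is_generator (S : {set 'rV[F]_n * 'rV[F]_n}) (g : {poly F}) : Prop :=
  [/\ g \is monic, g %| negmod, redR g \in first_proj S &
      forall a, a \in first_proj S -> a != 0 -> (size g <= size (vpoly a))%N].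

Definition uniquely_negacyclic (S : {set 'rV[F]_n * 'rV[F]_n}) (g : {poly F}) : Prop :=
  exists! f : 'rV[F]_n, (redR g, f) \in S.

End Negacyclic.

From mathcomp Require Import all_boot all_order all_algebra.
Set Implicit Arguments. Unset Strict Implicit. Unset Printing Implicit Defensive.
Import GRing.Theory.
Local Open Scope ring_scope.

(* The negacyclic shift is multiplication by X in R = F[X]/(X^n + 1), so a
   simultaneously negacyclic subspace S is an R-submodule of R x R.  Reducing
   the first component of an element of S modulo g and subtracting the
   corresponding multiple of (g, f) leaves an element of S whose first
   component is shorter than g, hence zero by minimality of g: the first
   projection of S is the ideal (g).  Thus S is spanned by the multiples of
   (g, f) together with its kernel {b | (0, b) in S}, and f is unique exactly
   when that kernel is trivial. *)

Section Reduction.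
Variables (F : finFieldType) (n : nat).
Hypothesis n_gt0 : (0 < n)%N.

Lemma size_negmod : size (negmod F n) = n.+1.
Proof. by rewrite /negmod size_polyDl size_polyXn // size_poly1 ltnS. Qed.

Lemma negmod_neq0 : negmod F n != 0.
Proof. by rewrite -size_poly_eq0 size_negmod. Qed.

Lemma coef_vpoly (v : 'rV[F]_n) (i : 'I_n) : (vpoly v)`_i = v 0 i.
Proof.
rewrite /vpoly coef_sum (bigD1 i) //= coefZ coefXn eqxx mulr1 big1 ?addr0 //.
move=> j ji; rewrite coefZ coefXn.
by case: eqP => [/val_inj ij | _]; [case/eqP: ji | rewrite mulr0].
Qed.

Lemma coef_vpoly_ge (v : 'rV[F]_n) i : (n <= i)%N -> (vpoly v)`_i = 0.
Proof.
move=> n_le_i; rewrite /vpoly coef_sum big1 // => j _; rewrite coefZ coefXn.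
by case: eqP => [eq_ij | _]; [move: (ltn_ord j); rewrite -eq_ij ltnNge n_le_i | rewrite mulr0].
Qed.

Lemma size_vpoly (v : 'rV[F]_n) : (size (vpoly v) <= n)%N.
Proof. by apply/leq_sizeP => j; apply: coef_vpoly_ge. Qed.

Lemma vpoly0 : vpoly (0 : 'rV[F]_n) = 0.
Proof. by rewrite /vpoly big1 // => i _; rewrite mxE scale0r. Qed.

Lemma vpolyK (v : 'rV[F]_n) : redR n (vpoly v) = v.
Proof.
apply/rowP => i; rewrite mxE modp_small ?coef_vpoly //.
by rewrite size_negmod ltnS size_vpoly.
Qed.

Lemma redRK (a : {poly F}) : vpoly (redR n a) = a %% negmod F n.
Proof.
apply/polyP => i; case: (ltnP i n) => [i_lt_n | n_le_i].
  by rewrite (coef_vpoly _ (Ordinal i_lt_n)) mxE.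
have /leq_sizeP -> // : (size (a %% negmod F n)%R <= n)%N.
  by rewrite -ltnS -size_negmod ltn_modp negmod_neq0.
by rewrite coef_vpoly_ge.
Qed.

Lemma redR0 : redR n (0 : {poly F}) = 0.
Proof. by apply/rowP => i; rewrite !mxE mod0p coef0. Qed.

Lemma redRD (a b : {poly F}) : redR n (a + b) = redR n a + redR n b.
Proof. by apply/rowP => i; rewrite !mxE modpD coefD. Qed.

Lemma redRB (a b : {poly F}) : redR n (a - b) = redR n a - redR n b.
Proof. by apply/rowP => i; rewrite !mxE modpD modpN coefD coefN. Qed.

Lemma redRZ (c : F) (a : {poly F}) : redR n (c *: a) = c *: redR n a.
Proof. by apply/rowP => i; rewrite !mxE modpZl coefZ. Qed.

Lemma redRMr (a b : {poly F}) : redR n (a * vpoly (redR n b)) = redR n (a * b).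
Proof. by apply/rowP => i; rewrite !mxE redRK modp_mul. Qed.

Lemma redRMl (a b : {poly F}) : redR n (vpoly (redR n a) * b) = redR n (a * b).
Proof. by rewrite mulrC redRMr mulrC. Qed.

(* X v = v_{n-1} (X^n + 1) + r with size r <= n, and r is the shifted vector. *)
Lemma negshiftE (v : 'rV[F]_n) : negshift v = redR n ('X * vpoly v).
Proof.
set c := (vpoly v)`_n.-1; set r := 'X * vpoly v - c%:P * negmod F n.
have coef_r j : r`_j = (if j == 0%N then 0 else (vpoly v)`_j.-1)
                       - c * ((j == n)%:R + (j == 0%N)%:R).
  by rewrite /r coefB coefXM coefCM /negmod coefD coefXn coef1.
have size_r : (size r <= n)%N.
  apply/leq_sizeP => j n_le_j.
  rewrite coef_r (gtn_eqF (leq_trans n_gt0 n_le_j)) addr0.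
  case: ltngtP n_le_j => // [n_lt_j | <-] _; last by rewrite mulr1 subrr.
  by rewrite mulr0 subr0 coef_vpoly_ge // -ltnS (ltn_predK n_lt_j).
have -> : 'X * vpoly v = c%:P * negmod F n + r by rewrite addrC subrK.
apply/rowP => i; rewrite !mxE modp_addl_mul_small ?size_negmod ?ltnS //.
rewrite coef_r (ltn_eqF (ltn_ord i)) add0r.
by case: (_ == 0%N); rewrite ?mulr1 ?mulr0 ?sub0r ?subr0.
Qed.

End Reduction.

Section NegacyclicSubspace.
Variables (F : finFieldType) (n : nat) (S : {set 'rV[F]_n * 'rV[F]_n}).
Hypothesis S_subspace : is_subspace S.

Lemma subspaceB x1 y1 x2 y2 :
  (x1, y1) \in S -> (x2, y2) \in S -> (x1 - x2, y1 - y2) \in S.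
Proof.
have [_ SD SZ] := S_subspace; move=> S1 /(SZ (-1)) S2.
by have := SD _ _ S1 S2; rewrite /= !scaleN1r.
Qed.

Lemma uniquely_negacyclicP g :
  redR n g \in first_proj S ->
  uniquely_negacyclic S g <-> (forall b, (0, b) \in S -> b = 0).
Proof.
rewrite inE => /existsP [f0 Sgf0]; have [_ SD _] := S_subspace.
split=> [[f [Sgf f_uniq]] b S0b | ker_trivial].
  have /f_uniq : (redR n g, f + b) \in S by have := SD _ _ Sgf S0b; rewrite addr0.
  by rewrite -{1}[f]addr0 => /addrI ->.
exists f0; split=> // f Sgf; apply/eqP; rewrite -subr_eq0; apply/eqP/ker_trivial.
by have := subspaceB Sgf0 Sgf; rewrite subrr.
Qed.

Hypotheses (n_gt0 : (0 < n)%N) (S_negacyclic : simul_negacyclic S).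

Lemma subspace_polyM q x y :
  (x, y) \in S -> (redR n (q * vpoly x), redR n (q * vpoly y)) \in S.
Proof.
have [S0 SD SZ] := S_subspace.
elim/poly_ind: q x y => [|q c IHq] x y Sxy; first by rewrite !mul0r redR0.
have expand u : redR n ((q * 'X + c%:P) * vpoly u)
                = redR n (q * vpoly (negshift u)) + c *: u.
  by rewrite negshiftE // redRMr // mulrDl -mulrA mul_polyC redRD redRZ vpolyK.
rewrite !expand.
exact: (SD (_, _) (_, _) (IHq _ _ (S_negacyclic Sxy)) (SZ c (x, y) Sxy)).
Qed.

Lemma subspace_generated_pair g f (a : 'rV[F]_n) :
  (redR n g, f) \in S ->
  (redR n (vpoly a * g), redR n (vpoly a * vpoly f)) \in S.
Proof. by move=> /(subspace_polyM (vpoly a)); rewrite redRMr. Qed.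

Lemma generator_dvdp g x y : is_generator S g -> (x, y) \in S -> g %| vpoly x.
Proof.
case=> g_monic g_dvd; rewrite inE => /existsP [f0 Sgf0] g_min Sxy.
set q := vpoly x %/ g; set r := vpoly x %% g.
have x_sub_qg : x - redR n (vpoly (redR n q) * g) = redR n r.
  rewrite (redRMl n_gt0) -{1}(vpolyK n_gt0 x) -redRB.
  by rewrite {1}(divp_eq (vpoly x) g) addrC addKr.
have Sr : redR n r \in first_proj S.
  rewrite inE; apply/existsP; eexists.
  by rewrite -x_sub_qg; apply: subspaceB Sxy (subspace_generated_pair _ Sgf0).
have size_r : (size r < size g)%N by rewrite ltn_modp monic_neq0.
have size_g : (size g <= n.+1)%N.
  by rewrite -(size_negmod F n_gt0) dvdp_leq ?negmod_neq0.
have r_small : vpoly (redR n r) = r.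
  rewrite (redRK n_gt0) modp_small // (size_negmod F n_gt0).
  exact: leq_trans size_r size_g.
rewrite /dvdp -/r; apply: contraT => r_neq0.
have redR_r_neq0 : redR n r != 0.
  by apply: contra r_neq0 => /eqP r0; rewrite -r_small r0 vpoly0.
by have := g_min _ Sr redR_r_neq0; rewrite r_small leqNgt size_r.
Qed.

Lemma generator_span g f :
  is_generator S g -> (forall b, (0, b) \in S -> b = 0) -> (redR n g, f) \in S ->
  S = [set (redR n (vpoly a * g), redR n (vpoly a * vpoly f)) | a : 'rV[F]_n].
Proof.
move=> g_gen ker_trivial Sgf; apply/setP => -[x y]; apply/idP/imsetP => [Sxy|].
  set a := redR n (vpoly x %/ g).
  have x_eq : x = redR n (vpoly a * g).
    by rewrite /a (redRMl n_gt0) divpK ?(generator_dvdp g_gen Sxy) ?vpolyK.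
  exists a => //; congr (_, _) => //; apply/eqP; rewrite -subr_eq0; apply/eqP.
  apply: ker_trivial; rewrite -(subrr x) {2}x_eq.
  exact: subspaceB Sxy (subspace_generated_pair a Sgf).
by case=> a _ ->; apply: subspace_generated_pair.
Qed.

End NegacyclicSubspace.

Theorem mainTheorem4 (p n : nat) (S : {set 'rV['F_p]_n * 'rV['F_p]_n})
  (g : {poly 'F_p}) :
  prime p -> odd p -> (0 < n)%N -> coprime n p ->
  is_subspace S -> simul_negacyclic S -> is_generator S g ->
  (uniquely_negacyclic S g <-> (forall b, (0, b) \in S -> b = 0)) /\
  (forall f : 'rV['F_p]_n, uniquely_negacyclic S g -> (redR n g, f) \in S ->
     S = [set (redR n (vpoly a * g), redR n (vpoly a * vpoly f)) | a : 'rV['F_p]_n]).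
Proof.
move=> _ _ n_gt0 _ S_subspace S_negacyclic g_gen.
have [_ _ g_in _] := g_gen.
have unique_iff_ker := uniquely_negacyclicP S_subspace g_in.
split=> // f /unique_iff_ker ker_trivial Sgf.
exact: generator_span.
Qed.
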